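(* There is at most one prime $p$ such that the set of boards $\{G_{p,n}: n\ge 1\}$ contains infinitely many boards of outcome class $V$.
   Context: Domineering is a two-player game played on a rectangular grid of unit squares. The players alternate placing dominoes, each covering two adjacent unoccupied squares; the player Vertical must place dominoes vertically (covering two squares in the same column), and the player Horizontal must place them horizontally (covering two squares in the same row). A player with no legal move on her turn loses. $G_{m,n}$ denotes the empty board with vertical dimension $m$ (number of rows) and horizontal dimension $n$ (number of columns). Every position has one of four outcome classes under optimal play: $V$ (Vertical wins whoever moves first), $H$ (Horizontal wins whoever moves first), $1$ (the player who moves first wins), $2$ (the player who moves second wins). *)

From mathcomp Require Import all_boot.
Set Implicit Arguments. Unset Strict Implicit. Unset Printing Implicit Defensive.

(* A position is the (duplicate-free) list of its unoccupied
   cells; a cell is (row, column).  Player [true] = Vertical (covers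
   (r,c),(r+1,c)), player [false] = Horizontal (covers (r,c),(r,c+1)). *)

Definition cell := (nat * nat)%type.

Definition partner (vert : bool) (x : cell) : cell :=
  if vert then (x.1.+1, x.2) else (x.1, x.2.+1).

Definition play (vert : bool) (x : cell) (s : seq cell) : seq cell :=
  [seq z <- s | (z != x) && (z != partner vert x)].

(* [wins k vert s]: the player [vert], about to move in position [s], has a
   winning strategy (normal play: a player with no legal move loses),
   computed with recursion depth [k]. Each move removes two cells, so depth
   [size s] suffices (see [mover_wins]). *)
Fixpoint wins (k : nat) (vert : bool) (s : seq cell) : bool :=
  match k with
  | 0 => false
  | k'.+1 => has (fun x => (partner vert x \in s) &&
                           ~~ wins k' (~~ vert) (play vert x s)) s
  end.

Definition mover_wins (vert : bool) (s : seq cell) : bool :=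
  wins (size s) vert s.

Definition board (m n : nat) : seq cell :=
  [seq (r, c) | r <- iota 0 m, c <- iota 0 n].

Inductive outcome := OutV | OutH | Out1 | Out2.

Definition outcome_of (s : seq cell) : outcome :=
  match mover_wins true s, mover_wins false s with
  | true, false => OutV
  | false, true => OutH
  | true, true => Out1
  | false, false => Out2
  end.

From mathcomp Require Import all_boot zify.
Set Implicit Arguments. Unset Strict Implicit. Unset Printing Implicit Defensive.

(* Let [vwins m n] say that Vertical wins the m x n board whoever starts.
   Opening an empty line in a position only destroys dominoes of the player
   who could cross it, and non-interacting positions add up like sums of
   games. Hence [vwins a n] and [vwins b n] give [vwins (a + b) n], and
   [vwins a (n + 2a)] gives [vwins a n] because the removed a x 2a block is
   an a x a square next to its own transpose, which Vertical loses moving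
   first (Tweedledum-Tweedledee). By symmetry [vwins m n] excludes
   [vwins n m]. If [vwins p n] for infinitely many [n], shortening and the
   Chinese remainder theorem give [vwins p n] for a multiple [n] of any [q]
   coprime to [2p]. For distinct odd primes this yields [vwins p n] and
   [vwins q m] with [q | n] and [p | m], and stacking copies gives both
   [vwins m n] and [vwins n m]. For [p = 2] and odd [q] all such [n] must be
   odd, and a residue computation modulo 4 and [2q] yields a common odd
   [y > q] with [vwins 2 y] and [vwins q y]; stacking gives [vwins y y]. *)

Lemma size_play v (x : cell) (s : seq cell) : x \in s -> size (play v x s) < size s.
Proof.
move=> xs; rewrite /play size_filter -(count_predC (fun z => (z != x) && (z != partner v x)) s).
rewrite -[X in X < _]addn0 ltn_add2l -has_count.
by apply/hasP; exists x => //=; rewrite eqxx.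
Qed.

Lemma play_ind (P : seq cell -> Prop) :
  (forall s, (forall v x, x \in s -> P (play v x s)) -> P s) -> forall s, P s.
Proof.
move=> IH s; elim: (size s).+1 {-2}s (ltnSn (size s)) => // n IHn {}s le_s_n.
apply: IH => v x xs; apply: IHn; exact: leq_trans (size_play v xs) _.
Qed.

Lemma wins_depth k1 k2 v s :
  size s <= k1 -> size s <= k2 -> wins k1 v s = wins k2 v s.
Proof.
elim: k1 k2 v s => [|k1 IH] [|k2] v s //=.
- by rewrite leqn0 => /nilP ->.
- by move=> _; rewrite leqn0 => /nilP ->.
move=> le1 le2; apply: eq_in_has => x xs /=; congr (_ && ~~ _).
by apply: IH; rewrite -ltnS; exact: leq_trans (size_play v xs) _.
Qed.

Lemma mover_winsE v s : mover_wins v s =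
  has (fun x => (partner v x \in s) && ~~ mover_wins (~~ v) (play v x s)) s.
Proof.
rewrite /mover_wins; case Es: (size s) => [|k]; first by move/size0nil: Es => ->.
apply: eq_in_has => x xs /=; congr (_ && ~~ _); apply: wins_depth => //.
by rewrite -ltnS -Es size_play.
Qed.

Lemma eq_mover_wins v s t : s =i t -> mover_wins v s = mover_wins v t.
Proof.
elim/play_ind: s t v => s IH t v eq_st.
rewrite !mover_winsE (eq_has_r eq_st); apply: eq_in_has => x xt /=.
rewrite eq_st; congr (_ && ~~ _); apply: IH; first by rewrite eq_st.
by move=> z; rewrite !mem_filter eq_st.
Qed.

Lemma map_play (f : cell -> cell) v v' x s : injective f ->
  f (partner v x) = partner v' (f x) ->
  play v' (f x) (map f s) = map f (play v x s).
Proof.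
move=> f_inj f_part; rewrite /play filter_map; congr map; apply: eq_filter => z /=.
by rewrite -f_part !(inj_eq f_inj).
Qed.

(* [g] says which player the relabelled dominoes belong to. *)
Lemma mover_wins_map (f : cell -> cell) (g : bool -> bool) : injective f ->
  (forall v, g (~~ v) = ~~ g v) ->
  (forall v x, f (partner v x) = partner (g v) (f x)) ->
  forall v s, mover_wins (g v) (map f s) = mover_wins v s.
Proof.
move=> f_inj g_neg f_part v s; elim/play_ind: s v => s IH v.
rewrite mover_winsE (mover_winsE v s) has_map; apply: eq_in_has => x xs /=.
by rewrite -f_part (mem_map f_inj) (map_play _ f_inj (f_part v x)) -g_neg IH.
Qed.

(* If [f] keeps every domino of player [b] but destroys some dominoes of the
   opponent, then the position gets better for [b]. *)
Lemma mover_wins_cut (f : cell -> cell) b : injective f ->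
  (forall x, f (partner b x) = partner b (f x)) ->
  (forall x y, partner (~~ b) (f x) = f y -> y = partner (~~ b) x) ->
  forall s, (mover_wins b s -> mover_wins b (map f s)) /\
            (mover_wins (~~ b) (map f s) -> mover_wins (~~ b) s).
Proof.
move=> f_inj f_part f_part' s; elim/play_ind: s => s IH; split.
- rewrite mover_winsE => /hasP [x xs /andP [px lose]].
  rewrite mover_winsE; apply/hasP; exists (f x); first exact: map_f.
  rewrite -f_part (mem_map f_inj) px /= (map_play _ f_inj (f_part x)).
  by apply: contra lose; case: (IH b x xs).
- rewrite mover_winsE => /hasP [_ /mapP [x xs ->] /andP [/mapP [y ys Ey] lose]].
  move: (Ey) => /f_part' Eyx; subst y.
  rewrite mover_winsE; apply/hasP; exists x => //; rewrite ys /=.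
  rewrite (map_play _ f_inj (esym Ey)) negbK in lose.
  by apply: contra lose; case: (IH (~~ b) x xs) => + _; rewrite negbK.
Qed.

Lemma mover_wins_play v s x : x \in s -> partner v x \in s ->
  ~~ mover_wins (~~ v) (play v x s) -> mover_wins v s.
Proof. by move=> xs px lose; rewrite mover_winsE; apply/hasP; exists x; rewrite ?px. Qed.

Lemma mem_play v x s z : z \in play v x s -> z \in s.
Proof. by rewrite mem_filter => /andP []. Qed.

Lemma play_id v x s : x \notin s -> partner v x \notin s -> play v x s = s.
Proof.
move=> xNs pNs; apply/all_filterP/allP => z zs /=.
by apply/andP; split; apply/eqP => Ez; [move: xNs | move: pNs]; rewrite -Ez zs.
Qed.

Lemma play_cat v x A B : play v x (A ++ B) = play v x A ++ play v x B.
Proof. exact: filter_cat. Qed.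

Definition apart (A B : seq cell) := forall (a b : cell) v, a \in A -> b \in B ->
  [/\ a <> b, a <> partner v b & b <> partner v a].

Lemma apart_sym A B : apart A B -> apart B A.
Proof. by move=> AB a b v aB bA; have [ba ? ?] := AB b a v bA aB; split=> // ab; apply: ba. Qed.

Lemma apart_play v x A B : apart A B -> apart (play v x A) B.
Proof. by move=> AB a b w /mem_play; apply: AB. Qed.

Section Apart.
Variables (A B : seq cell).
Hypothesis AB : apart A B.

Lemma play_catl v x : x \in A -> play v x (A ++ B) = play v x A ++ B.
Proof.
move=> xA; rewrite play_cat [play v x B]play_id //.
  by apply/negP => xB; have [] := AB v xA xB.
by apply/negP => pB; have [] := AB v xA pB.
Qed.

Lemma mem_partner_catl v x : x \in A -> (partner v x \in A ++ B) = (partner v x \in A).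
Proof.
move=> xA; rewrite mem_cat orbC; case: (boolP (_ \in B)) => //= pB.
by have [] := AB v xA pB.
Qed.

End Apart.

Lemma mover_wins_cat P A B : apart A B ->
  (mover_wins P A -> ~~ mover_wins (~~ P) B -> mover_wins P (A ++ B)) /\
  (~~ mover_wins (~~ P) A -> ~~ mover_wins (~~ P) B ->
   ~~ mover_wins (~~ P) (A ++ B)).
Proof.
move: {2}(size A + size B) (leqnn (size A + size B)) => n.
elim: n A B => [|n IH] A B.
  by rewrite leqn0 addn_eq0 => /andP [/nilP -> /nilP ->].
have shrink v x (C D : seq cell) : x \in C -> size C + size D <= n.+1 ->
    size (play v x C) + size D <= n.
  by move=> xC le_n; have := size_play v xC; lia.
move=> le_n AB; split.
- rewrite mover_winsE => /hasP [x xA /andP [px lose]] loseB.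
  apply: (mover_wins_play (x := x)); rewrite ?mem_cat ?xA ?px //.
  rewrite (play_catl AB _ xA).
  exact: (proj2 (IH _ _ (shrink _ _ _ _ xA le_n) (apart_play AB))).
- move=> loseA loseB; apply/negP; rewrite mover_winsE => /hasP [y].
  rewrite mem_cat => /orP [yA | yB] /andP [py]; rewrite negbK.
  + rewrite (mem_partner_catl AB _ yA) in py; rewrite (play_catl AB _ yA).
    move/negP; apply; apply: (proj1 (IH _ _ (shrink _ _ _ _ yA le_n) (apart_play AB))) => //.
    by apply: contraNT loseA => lose; apply: (mover_wins_play yA py); rewrite negbK.
  + have BA := apart_sym AB.
    rewrite mem_cat orbC -mem_cat (mem_partner_catl BA _ yB) in py.
    have E : play (~~ P) y (A ++ B) =i play (~~ P) y B ++ A.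
      by move=> z; rewrite -(play_catl BA _ yB) !mem_filter !mem_cat [_ || _]orbC.
    have le_n' : size B + size A <= n.+1 by rewrite addnC.
    rewrite (eq_mover_wins _ E); move/negP; apply.
    apply: (proj1 (IH _ _ (shrink _ _ _ _ yB le_n') (apart_play BA))) => //.
    by apply: contraNT loseB => lose; apply: (mover_wins_play yB py); rewrite negbK.
Qed.

Definition flip k (x : cell) : cell := (x.2, x.1 + k).

Lemma flip_inj k : injective (flip k).
Proof. by move=> [r c] [r' c'] [-> /addIn ->]. Qed.

Lemma flip_partner k v x : flip k (partner v x) = partner (~~ v) (flip k x).
Proof. by case: v; case: x => r c; rewrite /flip /= ?addSn. Qed.

(* Tweedledum-Tweedledee: Horizontal answers every move of Vertical by the
   transposed move in the other copy, so Vertical runs out of moves first. *)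
Lemma mover_wins_flip_cat k (T : seq cell) : (forall x, x \in T -> x.2 < k) ->
  ~~ mover_wins true (T ++ map (flip k) T).
Proof.
elim/play_ind: T => T IH T_left.
have notin_flip (S : seq cell) z : z.2 < k -> z \notin map (flip k) S.
  by move=> zk; apply/mapP => -[y _ Ez]; move: zk; rewrite Ez /= ltnNge leq_addl.
have notin_T z : k <= z.2 -> z \notin T.
  by move=> kz; apply/negP => /T_left; rewrite ltnNge kz.
apply/negP; rewrite mover_winsE => /hasP [x /[!mem_cat] /orP [xT | /mapP [y yT ->]]].
- move: (T_left _ xT) => xk; rewrite (negbTE (notin_flip T (partner true x) xk)) orbF.
  move=> /andP [px].
  rewrite play_cat [play _ _ (map _ _)]play_id ?notin_flip //; move/negP; apply.
  apply: (mover_wins_play (x := flip k x)); rewrite ?mem_cat -?flip_partner ?map_f ?orbT //.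
  have left_play z : z \in play true x T -> z.2 < k by move/mem_play/T_left.
  have fx_out : flip k x \notin play true x T.
    by apply/negP => /left_play /=; rewrite ltnNge leq_addl.
  have px_out : partner (~~ true) (flip k x) \notin play true x T.
    by apply/negP => /left_play /=; lia.
  rewrite play_cat (play_id fx_out px_out) (map_play _ (@flip_inj k) (flip_partner k true x)).
  by apply: IH.
- rewrite -(flip_partner k false y) (mem_map (@flip_inj k)).
  rewrite (negbTE (notin_T _ _)) ?leq_addl //= => /andP [py lose].
  rewrite play_cat [play _ _ T]play_id ?notin_T ?leq_addl // in lose.
  rewrite (map_play _ (@flip_inj k) (flip_partner k false y)) in lose.
  move/negP: lose; apply; apply: (mover_wins_play (x := y)); rewrite ?mem_cat ?yT ?py //.
  rewrite play_cat [play _ _ (map _ _)]play_id ?notin_flip ?(T_left _ yT) ?(T_left _ py) //.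
  by apply: IH => // z /mem_play /T_left.
Qed.

Lemma mem_board (x : cell) m n : (x \in board m n) = (x.1 < m) && (x.2 < n).
Proof.
case: x => r c; apply/allpairsP/andP => [[[r' c'] [/= hr hc [-> ->]]] | [hr hc]].
  by move: hr hc; rewrite !mem_iota.
by exists (r, c); rewrite !mem_iota.
Qed.

Definition shift dr dc (x : cell) : cell := (x.1 + dr, x.2 + dc).
Definition transpose (x : cell) : cell := (x.2, x.1).
(* [skip_col n] and [skip_row a] open an empty line in front of column [n],
   resp. row [a]. *)
Definition skip_col n (x : cell) : cell := (x.1, if x.2 < n then x.2 else x.2.+1).
Definition skip_row a (x : cell) : cell := (if x.1 < a then x.1 else x.1.+1, x.2).

Lemma mover_wins_shift dr dc v s : mover_wins v (map (shift dr dc) s) = mover_wins v s.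
Proof.
apply: (mover_wins_map (g := id)) => // [[r c] [r' c'] [/addIn -> /addIn ->] //|].
by case=> -[r c]; rewrite /shift /= addSn.
Qed.

Lemma mover_wins_transpose v s : mover_wins (~~ v) (map transpose s) = mover_wins v s.
Proof. by apply: (mover_wins_map (g := negb)) => // [[r c] [r' c'] [-> ->]|[] []]. Qed.

Lemma mover_wins_skip_col n s :
  (mover_wins true s -> mover_wins true (map (skip_col n) s)) /\
  (mover_wins false (map (skip_col n) s) -> mover_wins false s).
Proof.
apply: mover_wins_cut => [[r c] [r' c']|[r c]|[r c] [r' c']] //; rewrite /skip_col /=;
  by case: ifP; case: ifP => h1 h2 [-> E]; congr pair; lia.
Qed.

Lemma mover_wins_skip_row a s :
  (mover_wins false s -> mover_wins false (map (skip_row a) s)) /\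
  (mover_wins true (map (skip_row a) s) -> mover_wins true s).
Proof.
apply: mover_wins_cut => [[r c] [r' c']|[r c]|[r c] [r' c']] //; rewrite /skip_row /=;
  by case: ifP; case: ifP => h1 h2 [E ->]; congr pair; lia.
Qed.

Lemma apart_col k (A B : seq cell) : (forall x : cell, x \in A -> x.2 < k) ->
  (forall x : cell, x \in B -> k < x.2) -> apart A B.
Proof.
move=> A_left B_right a b v /A_left ak /B_right kb.
by case: v; split; move=> /(congr1 snd) /=; lia.
Qed.

Lemma apart_row k (A B : seq cell) : (forall x : cell, x \in A -> x.1 < k) ->
  (forall x : cell, x \in B -> k < x.1) -> apart A B.
Proof.
move=> A_top B_bot a b v /A_top ak /B_bot kb.
by case: v; split; move=> /(congr1 fst) /=; lia.
Qed.

Lemma board_skip_col a n k :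
  map (skip_col n) (board a (n + k)) =i board a n ++ map (shift 0 n.+1) (board a k).
Proof.
move=> [r c]; rewrite mem_cat; apply/mapP/orP => [[[r' c']]|].
  rewrite mem_board /skip_col /= => /andP [hr hc] [-> ->]; case: ltnP => h.
    by left; rewrite mem_board /=; lia.
  by right; apply/mapP; exists (r', c' - n); rewrite ?mem_board /shift /=; [lia | congr pair; lia].
case=> [|/mapP [[r' c']]]; rewrite mem_board /= => /andP [hr hc].
  by exists (r, c); rewrite ?mem_board /skip_col /= ?hc //; lia.
move=> [-> ->]; exists (r', c' + n); rewrite ?mem_board /skip_col /=; first lia.
by case: ltnP => h; congr pair; lia.
Qed.

Lemma board_skip_row a b n :
  map (skip_row a) (board (a + b) n) =i board a n ++ map (shift a.+1 0) (board b n).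
Proof.
move=> [r c]; rewrite mem_cat; apply/mapP/orP => [[[r' c']]|].
  rewrite mem_board /skip_row /= => /andP [hr hc] [-> ->]; case: ltnP => h.
    by left; rewrite mem_board /=; lia.
  by right; apply/mapP; exists (r' - a, c'); rewrite ?mem_board /shift /=; [lia | congr pair; lia].
case=> [|/mapP [[r' c']]]; rewrite mem_board /= => /andP [hr hc].
  by exists (r, c); rewrite ?mem_board /skip_row /= ?hr //; lia.
move=> [-> ->]; exists (r' + a, c'); rewrite ?mem_board /skip_row /=; first lia.
by case: ltnP => h; congr pair; lia.
Qed.

Lemma board_transpose m n : map transpose (board m n) =i board n m.
Proof.
move=> [r c]; apply/mapP/idP => [[[r' c'] + [-> ->]]|]; rewrite !mem_board /=.
  by move=> /andP [-> ->].
by move=> /andP [hr hc]; exists (c, r); rewrite ?mem_board ?hr ?hc.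
Qed.

Lemma board_flip a : board a a.*2 =i board a a ++ map (flip a) (board a a).
Proof.
move=> [r c]; rewrite mem_cat mem_board /=; apply/idP/orP => [/andP [hr hc]|].
  case: (ltnP c a) => h; first by left; rewrite mem_board /=; lia.
  by right; apply/mapP; exists (c - a, r); rewrite ?mem_board /flip /=; [lia | congr pair; lia].
case=> [|/mapP [[r' c']]]; rewrite mem_board /= => /andP [hr hc]; last move=> [-> ->]; lia.
Qed.

Definition vwins m n := mover_wins true (board m n) && ~~ mover_wins false (board m n).

Definition vwins_infinitely m := forall N, exists2 n, N < n & vwins m n.

Lemma vwins_outcome m n : outcome_of (board m n) = OutV -> vwins m n.
Proof. by rewrite /outcome_of /vwins; do 2!case: mover_wins. Qed.

Lemma vwins_gt0 m n : vwins m n -> (0 < m) && (0 < n).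
Proof.
have size_board : size (board m n) = m * n by rewrite size_allpairs !size_iota.
case/andP => + _; apply: contraTT; rewrite -muln_gt0 -eqn0Ngt -size_board size_eq0.
by move=> /eqP ->.
Qed.

(* Cutting off the last [a] x [2a] block, which Vertical loses moving first,
   can only help Vertical. *)
Lemma vwins_shorten a n : vwins a (n + a.*2) -> vwins a n.
Proof.
case/andP => V_first H_first.
set X := board a n; set Z := map (shift 0 n.+1) (board a a.*2).
have XZ : apart X Z.
  apply: (@apart_col n) => x; first by rewrite mem_board => /andP [].
  by case/mapP=> y _ ->; rewrite /= addnS ltnS leq_addl.
have Z_V : ~~ mover_wins true Z.
  rewrite mover_wins_shift (eq_mover_wins _ (board_flip a)).
  by apply: mover_wins_flip_cat => x; rewrite mem_board => /andP [].
have E := eq_mover_wins _ (board_skip_col a n a.*2).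
have [cut_V cut_H] := mover_wins_skip_col n (board a (n + a.*2)).
have [sum_H sum_V] := mover_wins_cat false XZ.
apply/andP; split.
- apply: contraLR (cut_V V_first) => X_V; rewrite E; exact: sum_V.
- apply: contra H_first => X_H; apply: cut_H; rewrite E; exact: sum_H.
Qed.

Lemma vwins_stack a b n : vwins a n -> vwins b n -> vwins (a + b) n.
Proof.
case/andP=> Va Ha /andP [Vb Hb].
set X := board a n; set Y := map (shift a.+1 0) (board b n).
have XY : apart X Y.
  apply: (@apart_row a) => x; first by rewrite mem_board => /andP [].
  by case/mapP=> y _ ->; rewrite /= addnS ltnS leq_addl.
have Y_H : ~~ mover_wins false Y by rewrite mover_wins_shift.
have E := eq_mover_wins _ (board_skip_row a b n).
have [cut_H cut_V] := mover_wins_skip_row a (board (a + b) n).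
have [sum_V sum_H] := mover_wins_cat true XY.
apply/andP; split.
- by apply: cut_V; rewrite E; exact: sum_V.
- by apply: contra (cut_H) _; rewrite E; exact: sum_H.
Qed.

Lemma vwins_transpose m n : vwins m n -> ~~ vwins n m.
Proof.
have T v : mover_wins v (board n m) = mover_wins (~~ v) (board m n).
  by rewrite -(eq_mover_wins _ (board_transpose m n)) -(mover_wins_transpose (~~ v)) negbK.
by rewrite /vwins !T => /andP [_ /negbTE ->].
Qed.

Lemma vwins_dvd a b n : vwins a n -> a %| b -> 0 < b -> vwins b n.
Proof.
move=> Va /dvdnP [k ->]; case: k => // k _.
elim: k => [|k IH]; first by rewrite mul1n.
by rewrite mulSn; apply: vwins_stack.
Qed.

Lemma vwins_cross a b m n : vwins a m -> vwins b n -> a %| n -> b %| m -> False.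
Proof.
move=> Vam Vbn a_n b_m.
have /andP [_ m_pos] := vwins_gt0 Vam; have /andP [_ n_pos] := vwins_gt0 Vbn.
have := vwins_transpose (vwins_dvd Vbn b_m m_pos).
by rewrite (vwins_dvd Vam a_n n_pos).
Qed.

Lemma vwins_modn a m n : vwins a m -> n <= m -> n = m %[mod a.*2] -> vwins a n.
Proof.
move=> + le_nm /eqP; rewrite eq_sym eqn_mod_dvd // => + /dvdnP [t Et].
rewrite -(subnKC le_nm) {}Et; elim: t => [|t IH]; first by rewrite addn0.
by rewrite mulSnr addnA => /vwins_shorten.
Qed.

Lemma vwins_infinitely_dvd a b : coprime a.*2 b -> vwins_infinitely a ->
  exists2 n, b %| n & vwins a n.
Proof.
move=> cop Va; have [N lt_N VN] := Va (a.*2 * b).*2.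
have /andP [a_pos _] := vwins_gt0 VN.
have b_pos : 0 < b.
  by case: b cop {lt_N} => //; rewrite /coprime gcdn0 => /eqP/(congr1 odd); rewrite odd_double.
set d := a.*2 * b; pose c := chinese a.*2 b N 0.
have c_mod : c %% d < d by rewrite ltn_mod muln_gt0 double_gt0 a_pos.
exists (c %% d + d).
  rewrite dvdn_addl ?dvdn_mull // /dvdn modn_dvdm ?dvdn_mull //.
  by rewrite (chinese_modr cop) mod0n.
apply: (vwins_modn VN); first by rewrite -addnn in lt_N; lia.
by rewrite -modnDmr modnMr addn0 modn_dvdm ?dvdn_mulr // (chinese_modl cop).
Qed.

Lemma vwins_infinitely_odd_coprime p q : odd p -> odd q -> coprime p q ->
  vwins_infinitely p -> vwins_infinitely q -> False.
Proof.
move=> odd_p odd_q cop Vp Vq.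
have [m q_m Vpm] : exists2 m, q %| m & vwins p m.
  by apply: vwins_infinitely_dvd Vp; rewrite -mul2n coprimeMl coprime2n odd_q.
have [n p_n Vqn] : exists2 n, p %| n & vwins q n.
  by apply: vwins_infinitely_dvd Vq; rewrite -mul2n coprimeMl coprime2n odd_p coprime_sym.
exact: vwins_cross Vpm Vqn p_n q_m.
Qed.

Lemma odd_common_residue q M N : odd q -> odd M -> odd N -> 3 * q < M -> M <= N ->
  exists y, [/\ q < y, y <= M, odd y, y = M %[mod q.*2] & y = N %[mod 4]].
Proof.
have odd_mod y : odd y = (y %% 2 == 1) by rewrite modn2; case: odd.
rewrite !odd_mod => /eqP oq /eqP oM /eqP oN lt_M le_MN.
case: (eqVneq (M %% 4) (N %% 4)) => [M4 | M4].
  by exists M; split; rewrite ?odd_mod //; lia.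
have le_qM : q.*2 <= M by lia.
exists (M - q.*2); split; rewrite ?odd_mod; [lia | exact: leq_subr | apply/eqP; lia | | lia].
by rewrite -[in RHS](subnK le_qM) modnDr.
Qed.

Lemma vwins_infinitely_two_odd q : odd q ->
  vwins_infinitely 2 -> vwins_infinitely q -> False.
Proof.
move=> odd_q V2 Vq.
have [m q_m V2m] : exists2 m, q %| m & vwins 2 m.
  by apply: vwins_infinitely_dvd V2; rewrite (_ : 2.*2 = 2 * 2) // coprimeMl coprime2n odd_q.
have odd_V2 n : vwins 2 n -> odd n.
  by move=> V2n; apply: contraT; rewrite -dvdn2 => two_n; case: (vwins_cross V2n V2n two_n two_n).
have odd_Vq n : vwins q n -> odd n.
  by move=> Vqn; apply: contraT; rewrite -dvdn2 => two_n; case: (vwins_cross V2m Vqn two_n q_m).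
have [M lt_M VM] := Vq (3 * q).
have [N lt_N VN] := V2 M.
have [y [lt_qy le_yM odd_y yM yN]] :=
  odd_common_residue odd_q (odd_Vq _ VM) (odd_V2 _ VN) lt_M (ltnW lt_N).
have Vqy : vwins q y := vwins_modn VM le_yM yM.
have V2y : vwins 2 y := vwins_modn VN (leq_trans le_yM (ltnW lt_N)) yN.
have Vy : vwins (q + (y - q)) y.
  apply: vwins_stack Vqy (vwins_dvd V2y _ _); last by rewrite subn_gt0.
  by rewrite dvdn2 oddB ?(ltnW lt_qy) // odd_y odd_q.
rewrite subnKC ?(ltnW lt_qy) // in Vy.
exact: (vwins_cross Vy Vy (dvdnn y) (dvdnn y)).
Qed.

Theorem corollary3p7 :
  forall p q : nat, prime p -> prime q ->
    (forall N, exists n, N < n /\ outcome_of (board p n) = OutV) ->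
    (forall N, exists n, N < n /\ outcome_of (board q n) = OutV) ->
    p = q.
Proof.
have inf m : (forall N, exists n, N < n /\ outcome_of (board m n) = OutV) ->
    vwins_infinitely m.
  by move=> Vm N; have [n [lt_n /vwins_outcome]] := Vm N; exists n.
move=> p q p_pr q_pr /inf Vp /inf Vq; apply/eqP; apply: contraT => neq_pq.
case: (even_prime p_pr) => [p2 | odd_p]; case: (even_prime q_pr) => [q2 | odd_q].
- by rewrite p2 q2 in neq_pq.
- by subst p; case: (vwins_infinitely_two_odd odd_q Vp Vq).
- by subst q; case: (vwins_infinitely_two_odd odd_p Vq Vp).
- case: (vwins_infinitely_odd_coprime odd_p odd_q _ Vp Vq).
  by rewrite prime_coprime // dvdn_prime2.
Qed.
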